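(* In the setting described in the context, for every node $j\in V$, $v_j\ge\dfrac{\delta}{\Pr(\zeta(j)=3)}$, where $\Pr(\zeta(j)=3)=1-\delta d_j^\oplus-\delta h_j$.
   Context: An SPSC instance: finite sets $S$ (services), $V$ (nodes), $U$ (users); sizes $s_i>0$; capacities $c_j>0$; for each user $k$ a service $i_k\in S$, a set $T_k\subseteq V$, a reward $w_k>0$. Let $\{x_{ij}\},\{y_k\}$ be an optimal solution of the LP with nonnegative variables: maximize $\sum_ky_kw_k$ s.t. $y_k\le\sum_{j\in T_k}x_{i_kj}$, $y_k\le1$; $\sum_ix_{ij}s_i\le c_j$; $x_{ij}=0$ if $s_i>c_j$; $0\le x_{ij}\le1$. Let $\beta:=1/4$, $\delta:=1/4$. For $j\in V$: $P_j^\oplus:=\{i:c_j/2<s_i\le c_j\}$, $P_j^\ominus:=\{i:c_j/4<s_i\le c_j/2\}$, $d_j^\oplus:=\sum_{i\in P_j^\oplus}x_{ij}$, $d_j^\ominus:=\sum_{i\in P_j^\ominus}x_{ij}$, $v_j:=\delta c_j/\sum_{i\in S:s_i\le c_j\beta}s_ix_{ij}$, $h_j:=d_j^\ominus$ if $d_j^\ominus<2$ and $h_j:=d_j^\ominus/2$ otherwise. The random construction map $\zeta:V\to\{1,2,3\}$ has $\zeta(j)$ independent over $j$, equal to $1,2,3$ with probabilities $\delta d_j^\oplus$, $\delta h_j$, $1-\delta d_j^\oplus-\delta h_j$. *)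

From mathcomp Require Import all_boot all_order all_algebra.
From mathcomp Require Import constructive_ereal.
Set Implicit Arguments. Unset Strict Implicit. Unset Printing Implicit Defensive.
Import Order.TTheory GRing.Theory Num.Theory.
Local Open Scope ring_scope.

Section SPSC.
Variables (R : realFieldType) (S V U : finType).
Variables (s : S -> R) (c : V -> R) (isvc : U -> S) (T : U -> {set V}) (w : U -> R).

Definition lp_feasible (x : S -> V -> R) (y : U -> R) : Prop :=
  (forall k, 0 <= y k) /\
  (forall k, y k <= \sum_(j in T k) x (isvc k) j) /\
  (forall k, y k <= 1) /\
  (forall j, \sum_(i : S) x i j * s i <= c j) /\
  (forall i j, c j < s i -> x i j = 0) /\
  (forall i j, 0 <= x i j <= 1).

Definition lp_objective (y : U -> R) : R := \sum_(k : U) y k * w k.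

Definition lp_optimal (x : S -> V -> R) (y : U -> R) : Prop :=
  lp_feasible x y /\
  forall x' y', lp_feasible x' y' -> lp_objective y' <= lp_objective y.

Definition beta : R := 1 / 4.
Definition delta : R := 1 / 4.

Variable (x : S -> V -> R).

Definition dplus (j : V) : R :=
  \sum_(i : S | (c j / 2 < s i) && (s i <= c j)) x i j.
Definition dminus (j : V) : R :=
  \sum_(i : S | (c j / 4 < s i) && (s i <= c j / 2)) x i j.
Definition hval (j : V) : R :=
  if dminus j < 2 then dminus j else dminus j / 2.

Definition small_load (j : V) : R :=
  \sum_(i : S | s i <= c j * beta) s i * x i j.

(* v_j := delta c_j / small_load j, read as +oo when the denominator is 0
   (delta c_j > 0). *)
Definition vval (j : V) : \bar R :=
  if small_load j == 0 then +oo%E else ((delta * c j) / small_load j)%:E.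

Definition zeta_prob (j : V) (t : nat) : R :=
  if t == 1%N then delta * dplus j
  else if t == 2%N then delta * hval j
  else if t == 3%N then 1 - delta * dplus j - delta * hval j
  else 0.

End SPSC.

From mathcomp Require Import all_boot all_order all_algebra.
From mathcomp Require Import constructive_ereal.
From mathcomp Require Import lra.
Import Order.TTheory GRing.Theory Num.Theory.
Local Open Scope ring_scope.

(* Split the services that fit on node j into small (s_i <= c_j/4), medium
   (c_j/4 < s_i <= c_j/2) and large (c_j/2 < s_i <= c_j) ones.  Their loads
   are at least small_load j, (c_j/4) d_j^- and (c_j/2) d_j^+, so the capacity
   constraint gives small_load j <= c_j (1 - d_j^+/2 - d_j^-/4), which is at
   most c_j Pr(zeta(j) = 3) because h_j <= d_j^-. *)

Section NodeLoad.
Variables (R : realFieldType) (S V : finType).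
Variables (s : S -> R) (c : V -> R) (x : S -> V -> R) (j : V).
Hypothesis s_ge0 : forall i, 0 <= s i.
Hypothesis x_ge0 : forall i, 0 <= x i j.

Lemma small_load_ge0 : 0 <= small_load s c x j.
Proof. by apply: sumr_ge0 => i _; rewrite mulr_ge0. Qed.

Lemma dplus_ge0 : 0 <= dplus s c x j.
Proof. exact: sumr_ge0. Qed.

Lemma dminus_ge0 : 0 <= dminus s c x j.
Proof. exact: sumr_ge0. Qed.

Lemma hval_le_dminus : hval s c x j <= dminus s c x j.
Proof. by have := dminus_ge0; rewrite /hval; case: ifP => _; lra. Qed.

Lemma size_classes_load_le :
  small_load s c x j + c j / 4 * dminus s c x j + c j / 2 * dplus s c x j
    <= \sum_i x i j * s i.
Proof.
rewrite /small_load /dminus /dplus !mulr_sumr.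
rewrite big_mkcond !(big_mkcond (fun i => _ && _)) -!big_split /=.
apply: ler_sum => i _; have := s_ge0 i; have := x_ge0 i.
rewrite /beta; case: (lerP (s i) (c j * (1 / 4))) => small;
case: (ltrP (c j / 4) (s i)) => [med_lo|med_lo]; case: (lerP (s i) (c j / 2)) => med_hi;
case: (ltrP (c j / 2) (s i)) => [lrg_lo|lrg_lo]; case: (lerP (s i) (c j)) => lrg_hi /=;
by nra.
Qed.

Lemma small_load_le_capacity_zeta3 :
  0 < c j -> \sum_i x i j * s i <= c j ->
  small_load s c x j <= c j * zeta_prob s c x j 3.
Proof.
move=> c_gt0 cap; have := size_classes_load_le.
have := dplus_ge0; have := hval_le_dminus.
rewrite /zeta_prob /delta /=.
set dp := dplus s c x j; set dm := dminus s c x j; set h := hval s c x j.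
move=> h_le dp_ge0.
have: c j / 4 * h <= c j / 4 * dm by rewrite ler_wpM2l // divr_ge0 // ltW.
have: c j / 4 * dp <= c j / 2 * dp by rewrite ler_wpM2r //; lra.
lra.
Qed.

End NodeLoad.

Lemma vval_ge_div (R : realFieldType) (S V : finType)
    (s : S -> R) (c : V -> R) (x : S -> V -> R) (j : V) (p : R) :
  0 < c j -> 0 <= small_load s c x j -> small_load s c x j <= c j * p ->
  ((delta R / p)%:E <= vval s c x j)%E.
Proof.
move=> c_gt0 L_ge0 L_le; rewrite /vval; case: eqP => [_|L_neq0]; first exact: leey.
have L_gt0 : 0 < small_load s c x j by rewrite lt_def L_ge0 andbT; apply/eqP.
have p_gt0 : 0 < p by rewrite -(pmulr_rgt0 _ c_gt0); apply: lt_le_trans L_le.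
have d_ge0 : 0 <= delta R by rewrite /delta; lra.
move: (delta R) d_ge0 => d d_ge0.
by rewrite lee_fin ler_pdivlMr // mulrAC ler_pdivrMr // -mulrA ler_wpM2l.
Qed.

Theorem theorem15 (R : realFieldType) (S V U : finType)
  (s : S -> R) (c : V -> R) (isvc : U -> S) (T : U -> {set V}) (w : U -> R)
  (x : S -> V -> R) (y : U -> R) :
  (forall i, 0 < s i) -> (forall j, 0 < c j) -> (forall k, 0 < w k) ->
  lp_optimal s c isvc T w x y ->
  forall j : V,
    ((delta R / zeta_prob s c x j 3) %:E <= vval s c x j)%E.
Proof.
move=> s_gt0 c_gt0 _ [[_ [_ [_ [cap [_ x01]]]]] _] j.
have s_ge0 i : 0 <= s i by exact: ltW.
have x_ge0 i : 0 <= x i j by case/andP: (x01 i j).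
apply: vval_ge_div => //; first exact: small_load_ge0.
exact: small_load_le_capacity_zeta3.
Qed.
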